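(* Let $(\mathcal A,\rho)$ be a pseudo-quasimetric space. Define $x\sim y$ iff $\rho(x,y)=0$, let $\tilde{\mathcal A}=\mathcal A/\sim$ with classes $[x]$, and set $\tilde\rho([x],[y])=\inf\{\rho(a,b):a\in[x],b\in[y]\}$. Then $(\tilde{\mathcal A},\tilde\rho)$ is a pseudo-metric space.
   Context: A pseudo-quasimetric space is a pair $(\mathcal A,\rho)$ with $\rho:\mathcal A\times\mathcal A\to\mathbb R_{\ge0}$ such that for all $x,y,z$: $\rho(x,x)=0$; $\rho(x,y)=\rho(y,x)$; and $\rho(x,z)\le C(\rho(x,y)+\rho(y,z))$ for a constant $C\ge1$ independent of $x,y,z$. It is a pseudo-metric space if in addition $x\ne y$ implies $\rho(x,y)>0$. (The relation $\sim$ is an equivalence relation.) *)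

From HB Require Import structures.
From mathcomp Require Import all_boot all_order all_algebra.
From mathcomp Require Import boolp classical_sets reals.
Set Implicit Arguments. Unset Strict Implicit. Unset Printing Implicit Defensive.
Import Order.TTheory GRing.Theory Num.Theory.
Local Open Scope ring_scope.
Local Open Scope classical_set_scope.

Section Defs.
Context (R : realType).

Definition pseudo_quasimetric (A : Type) (rho : A -> A -> R) : Prop :=
  (forall x y, 0 <= rho x y) /\
  (forall x, rho x x = 0) /\
  (forall x y, rho x y = rho y x) /\
  (exists C : R, 1 <= C /\
     forall x y z, rho x z <= C * (rho x y + rho y z)).

(* pseudo-metric (in the paper's sense): pseudo-quasimetric + separation. *)
Definition pseudo_metric (A : Type) (rho : A -> A -> R) : Prop :=
  pseudo_quasimetric rho /\ (forall x y, x <> y -> 0 < rho x y).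

Definition qrel (A : Type) (rho : A -> A -> R) (x y : A) : Prop := rho x y = 0.

Definition qclass (A : Type) (rho : A -> A -> R) (x : A) : set A :=
  [set y | qrel rho x y].

Definition quot (A : Type) (rho : A -> A -> R) : Type :=
  {S : set A | exists x, S = qclass rho x}.

Definition qrho (A : Type) (rho : A -> A -> R) (S T : quot rho) : R :=
  inf [set r : R | exists a b, proj1_sig S a /\ proj1_sig T b /\ r = rho a b].

End Defs.

(* Inside a class rho moves by at most a factor C: if rho a a' = 0 then
   rho a b <= C rho a' b.  Hence qrho([x],[y]) is squeezed between
   rho(x,y) / C^2 and rho(x,y), so qrho inherits the quasi-triangle inequality
   (with constant C^3), and qrho([x],[y]) = 0 forces rho(x,y) = 0, i.e. [x] = [y]. *)
From HB Require Import structures.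
From mathcomp Require Import all_boot all_order all_algebra.
From mathcomp Require Import boolp classical_sets reals.
Set Implicit Arguments. Unset Strict Implicit. Unset Printing Implicit Defensive.
Import Order.TTheory GRing.Theory Num.Theory.
Local Open Scope ring_scope.
Local Open Scope classical_set_scope.

Section QuotientPseudoMetric.
Variables (R : realType) (A : Type) (rho : A -> A -> R) (C : R).
Hypotheses (rho_ge0 : forall x y, 0 <= rho x y) (rho_xx : forall x, rho x x = 0)
  (rhoC : forall x y, rho x y = rho y x) (C_ge1 : 1 <= C)
  (rho_qtri : forall x y z, rho x z <= C * (rho x y + rho y z)).

Definition qclass_of (x : A) : quot rho :=
  exist _ (qclass rho x) (ex_intro _ x erefl).

Lemma quotP (S : quot rho) : exists x, S = qclass_of x.
Proof. by case: S => S [x eS]; exists x; exact: eq_exist. Qed.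

Lemma C_gt0 : 0 < C.
Proof. exact: lt_le_trans ltr01 C_ge1. Qed.

Lemma rho_qrel_le a a' b : rho a a' = 0 -> rho a b <= C * rho a' b.
Proof. by move=> aa'; rewrite -[rho a' b]add0r -aa'. Qed.

Lemma qrel_trans a a' b : rho a a' = 0 -> rho a' b = 0 -> rho a b = 0.
Proof.
move=> aa' a'b; apply/eqP; rewrite eq_le rho_ge0 andbT.
by rewrite -(mulr0 C) -a'b rho_qrel_le.
Qed.

Lemma qclass_of_eq x y : rho x y = 0 -> qclass_of x = qclass_of y.
Proof.
move=> xy; apply: eq_exist; apply/seteqP; split => z /=; rewrite /qrel.
- by move=> xz; apply: qrel_trans xz; rewrite rhoC.
- exact: qrel_trans.
Qed.

Lemma rho_qrel_le2 x y a b :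
  rho x a = 0 -> rho y b = 0 -> rho x y <= C ^+ 2 * rho a b.
Proof.
move=> xa yb; apply: le_trans (rho_qrel_le y xa) _.
rewrite expr2 -mulrA ler_pM2l ?C_gt0 // rhoC (rhoC a).
exact: rho_qrel_le yb.
Qed.

Lemma qrho_ge0 (S T : quot rho) : 0 <= qrho S T.
Proof.
have [x ->] := quotP S; have [y ->] := quotP T.
apply: lb_le_inf; first by exists (rho x y), x, y; rewrite /qclass_of /qclass /qrel /= !rho_xx.
by move=> _ [a [b [_ [_ ->]]]].
Qed.

Lemma qrho_le_rho x y : qrho (qclass_of x) (qclass_of y) <= rho x y.
Proof.
apply: ge_inf; last by exists x, y; rewrite /qclass_of /qclass /qrel /= !rho_xx.
by exists 0 => _ [a [b [_ [_ ->]]]].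
Qed.

Lemma rho_le_qrho x y : rho x y <= C ^+ 2 * qrho (qclass_of x) (qclass_of y).
Proof.
rewrite mulrC -ler_pdivrMr ?exprn_gt0 ?C_gt0 //.
apply: lb_le_inf; first by exists (rho x y), x, y; rewrite /qclass_of /qclass /qrel /= !rho_xx.
move=> _ [a [b [/= xa [/= yb ->]]]].
by rewrite ler_pdivrMr ?exprn_gt0 ?C_gt0 // mulrC rho_qrel_le2.
Qed.

Lemma qrhoC (S T : quot rho) : qrho S T = qrho T S.
Proof.
rewrite /qrho; congr inf; apply/seteqP.
by split=> _ [a [b [Sa [Tb ->]]]]; exists b, a; rewrite rhoC.
Qed.

Lemma qrho_pseudo_quasimetric : pseudo_quasimetric (@qrho R A rho).
Proof.
split; [exact: qrho_ge0 | split; [|split; [exact: qrhoC|]]].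
  move=> S; have [x ->] := quotP S; apply/eqP.
  by rewrite eq_le qrho_ge0 andbT -(rho_xx x) qrho_le_rho.
exists (C ^+ 3); split; first by rewrite exprn_ege1.
move=> S T U; have [x ->] := quotP S; have [y ->] := quotP T.
have [z ->] := quotP U.
apply: le_trans (qrho_le_rho x z) _; apply: le_trans (rho_qtri x y z) _.
rewrite exprS -mulrA ler_pM2l ?C_gt0 // mulrDr.
by rewrite lerD ?rho_le_qrho.
Qed.

Lemma qrho_gt0 (S T : quot rho) : S <> T -> 0 < qrho S T.
Proof.
have [x ->] := quotP S; have [y ->] := quotP T => neq.
rewrite lt0r qrho_ge0 andbT; apply: contra_notN neq => /eqP q0.
apply: qclass_of_eq; apply/eqP; rewrite eq_le rho_ge0 andbT.
by rewrite -(mulr0 (C ^+ 2)) -q0 rho_le_qrho.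
Qed.

End QuotientPseudoMetric.

Theorem lemma2p1 (R : realType) (A : Type) (rho : A -> A -> R) :
  pseudo_quasimetric rho -> pseudo_metric (@qrho R A rho).
Proof.
move=> [rho_ge0 [rho_xx [rhoC [C [C_ge1 rho_qtri]]]]]; split.
- exact: (qrho_pseudo_quasimetric rho_ge0 rho_xx rhoC C_ge1 rho_qtri).
- exact: (qrho_gt0 rho_ge0 rho_xx rhoC C_ge1 rho_qtri).
Qed.
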